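(* Let $I,J,K$ be a partition of $[m]$ and $\bm a\in\mathbb{R}^m$ with $P(\bm a,I,J,K)\ne\emptyset$, and let $F_{\bm a}$ be the face of $\delta\mathcal{A}_{\bm o}$ whose relative interior contains $\bm a$. Then $P(\bm b,I,J,K)\neq\emptyset$ for every $\bm b\in F_{\bm a}$.
   Context: Fix nonzero $\bm u_1,\dots,\bm u_m\in\mathbb{R}^n$ (repetitions and parallel vectors allowed), $U$ the $m\times n$ matrix with these rows; $U_I$, $\bm a_I$ denote rows/entries indexed by $I$. For a partition $I,J,K$ of $[m]$ (parts may be empty), $P(\bm a,I,J,K)=\{\bm x\in\mathbb{R}^n:U_I\bm x=\bm a_I,\ U_J\bm x\le\bm a_J,\ U_K\bm x\ge\bm a_K\}$. A circuit is a subset $C\subseteq[m]$ with $\{\bm u_i:i\in C\}$ a minimal linearly dependent indexed family; $\bm c^C\in\mathbb{R}^m$ satisfies $\sum c_i\bm u_i=\bm 0$ and $c_i\neq0\iff i\in C$. The derived arrangement $\delta\mathcal{A}_{\bm o}$ consists of the hyperplanes $\langle\bm c^C,\bm y\rangle=0$ in $\mathbb{R}^m$; its open faces are the nonempty sets $\{\bm y:\operatorname{sign}\langle\bm c^C,\bm y\rangle=\epsilon_C\ \forall C\}$ for fixed signs $\epsilon_C$, and its faces are the closures of open faces. Thus $F_{\bm a}$ is the closure of the open face containing $\bm a$. *)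

From HB Require Import structures.
From mathcomp Require Import all_boot all_order all_algebra.
From mathcomp Require Import all_classical all_reals all_analysis.
Set Implicit Arguments. Unset Strict Implicit. Unset Printing Implicit Defensive.
Import Order.TTheory GRing.Theory Num.Theory numFieldNormedType.Exports.
Local Open Scope ring_scope.

Section Defs.
Variables (R : realType) (m n : nat).
Implicit Types (U : 'M[R]_(m, n)) (C : {set 'I_m}).

Definition lin_dep U C : Prop :=
  exists d : 'cV[R]_m, d != 0 /\ (forall i, i \notin C -> d i 0 = 0) /\ d^T *m U = 0.

Definition circuit U C : Prop :=
  lin_dep U C /\ forall D : {set 'I_m}, D \proper C -> ~ lin_dep U D.

Definition circuit_vector U C (c : 'cV[R]_m) : Prop :=
  c^T *m U = 0 /\ forall i, (c i 0 != 0) = (i \in C).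

Definition dotv (x y : 'cV[R]_m) : R := \sum_(i < m) x i 0 * y i 0.

Definition polyhedron U (a : 'cV[R]_m) (I J K : {set 'I_m}) : set 'cV[R]_n :=
  [set x | forall i, (i \in I -> (U *m x) i 0 = a i 0) /\
                     (i \in J -> (U *m x) i 0 <= a i 0) /\
                     (i \in K -> (U *m x) i 0 >= a i 0)].

(* The open face of the derived arrangement containing a, given a choice
   c C of circuit vectors; and its closure, the face F_a. *)
Definition open_face U (c : {set 'I_m} -> 'cV[R]_m) (a : 'cV[R]_m) : set 'cV[R]_m :=
  [set y | forall C, circuit U C -> Num.sg (dotv (c C) y) = Num.sg (dotv (c C) a)].

Definition face_of U (c : {set 'I_m} -> 'cV[R]_m) (a : 'cV[R]_m) : set 'cV[R]_m :=
  @closure 'M[R]_(m, 1) (open_face U c a).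

Definition is_partition (I J K : {set 'I_m}) : Prop :=
  [/\ I :&: J = finset.set0, I :&: K = finset.set0, J :&: K = finset.set0 & I :|: J :|: K = finset.setT].

End Defs.

(* If P(b, I, J, K) were empty, Farkas' lemma would give a certificate y with
   y_J >= 0, y_K <= 0, y^T U = 0 and <y, b> < 0. Moving conformally inside the
   kernel shrinks the support of such a certificate until it is a circuit C, and
   then y = mu c^C. Feasibility of P(a, I, J, K) forces <y, a> >= 0, while
   <y, y'> < 0 still holds for points y' of the open face close to b. But on the
   open face <c^C, _> has the sign it has at a, so mu <c^C, y'> and mu <c^C, a>
   have the same sign: a contradiction. *)

From HB Require Import structures.
From mathcomp Require Import all_boot all_order all_algebra.
From mathcomp Require Import all_classical all_reals all_analysis.
From mathcomp Require Import ring lra.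
From Stdlib Require Import Classical.
Set Implicit Arguments. Unset Strict Implicit. Unset Printing Implicit Defensive.
Import Order.TTheory GRing.Theory Num.Theory numFieldNormedType.Exports.
Local Open Scope classical_set_scope.
Local Open Scope ring_scope.

Section FourierMotzkin.
Variables (R : realFieldType) (n : nat).

(* The pair (v, beta) stands for the inequality <v, x> <= beta. *)
Definition ineq := ('rV[R]_n * R)%type.

Definition dotr (v x : 'rV[R]_n) : R := \sum_j v 0 j * x 0 j.

Definition sat (x : 'rV[R]_n) (p : ineq) := dotr p.1 x <= p.2.

Inductive conic_comb (S : seq ineq) : 'rV[R]_n -> R -> Prop :=
| conic_comb_mem p : p \in S -> conic_comb S p.1 p.2
| conic_comb_add v1 b1 v2 b2 :
    conic_comb S v1 b1 -> conic_comb S v2 b2 -> conic_comb S (v1 + v2) (b1 + b2)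
| conic_comb_scale t v b : 0 <= t -> conic_comb S v b -> conic_comb S (t *: v) (t * b).

Lemma conic_comb_trans S S' v b :
  (forall p, p \in S' -> conic_comb S p.1 p.2) -> conic_comb S' v b -> conic_comb S v b.
Proof.
move=> HS'; elim=> {v b} [p /HS' // | v1 b1 v2 b2 _ ? _ ? | t v b ? _ ?].
- exact: conic_comb_add.
- exact: conic_comb_scale.
Qed.

Lemma dotrDl (v1 v2 x : 'rV[R]_n) : dotr (v1 + v2) x = dotr v1 x + dotr v2 x.
Proof. by rewrite /dotr -big_split; apply: eq_bigr => j _; rewrite mxE mulrDl. Qed.

Lemma dotrZl t (v x : 'rV[R]_n) : dotr (t *: v) x = t * dotr v x.
Proof. by rewrite /dotr mulr_sumr; apply: eq_bigr => j _; rewrite mxE mulrA. Qed.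

Lemma dotrNl (v x : 'rV[R]_n) : dotr (- v) x = - dotr v x.
Proof. by rewrite -scaleN1r dotrZl mulN1r. Qed.

Lemma exists_between (ls us : seq R) :
  (forall l u, l \in ls -> u \in us -> l <= u) ->
  exists t, (forall l, l \in ls -> l <= t) /\ (forall u, u \in us -> t <= u).
Proof.
move=> Hlu; pose t0 := \big[Order.min/0]_(u <- us) u.
exists (\big[Order.max/t0]_(l <- ls) l); split=> [l Hl | u Hu].
  exact: le_bigmax_seq.
rewrite big_seq; apply: bigmax_le => [|l Hl]; last exact: Hlu.
exact: ge_bigmin_seq.
Qed.

Section Elimination.
Variable k : 'I_n.

Definition set_coord (x : 'rV[R]_n) t : 'rV[R]_n := \row_j (if j == k then t else x 0 j).

Lemma set_coord_id x : set_coord x (x 0 k) = x.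
Proof. by apply/rowP => j; rewrite mxE; case: eqP => // ->. Qed.

Lemma dotr_set_coord x v t :
  dotr v (set_coord x t) = dotr v (set_coord x 0) + v 0 k * t.
Proof.
rewrite /dotr (bigD1 k) // [in RHS](bigD1 k) //= !mxE eqxx mulr0 add0r addrC.
by congr (_ + _); apply: eq_bigr => j /negbTE Hj; rewrite !mxE Hj.
Qed.

(* A nonnegative combination of p and q in which the k-th coefficient cancels. *)
Definition fm_comb (p q : ineq) : ineq :=
  ((- q.1 0 k) *: p.1 + p.1 0 k *: q.1, (- q.1 0 k) * p.2 + p.1 0 k * q.2).

Definition fm_elim (S : seq ineq) : seq ineq :=
  [seq p <- S | (p : ineq).1 0 k == 0] ++
  [seq fm_comb p q | p <- [seq p <- S | 0 < (p : ineq).1 0 k],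
                     q <- [seq q <- S | (q : ineq).1 0 k < 0]].

Lemma fm_elim_conic_comb S (p : ineq) : p \in fm_elim S -> conic_comb S p.1 p.2.
Proof.
rewrite mem_cat => /orP[|/allpairsP[[p1 q1] [/= Hp Hq ->]]].
  by rewrite mem_filter => /andP[_ /conic_comb_mem].
move: Hp Hq; rewrite !mem_filter => /andP[Hp1 Hp] /andP[Hq1 Hq].
apply: conic_comb_add; apply: conic_comb_scale; rewrite ?oppr_ge0 ?ltW //.
all: exact: conic_comb_mem.
Qed.

Definition fm_bound x (p : ineq) := (p.2 - dotr p.1 (set_coord x 0)) / p.1 0 k.

Lemma sat_set_coord_pos x t (p : ineq) : 0 < p.1 0 k ->
  sat (set_coord x t) p = (t <= fm_bound x p).
Proof. by move=> Hp; rewrite /sat dotr_set_coord ler_pdivlMr // lerBrDl mulrC. Qed.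

Lemma sat_set_coord_neg x t (p : ineq) : p.1 0 k < 0 ->
  sat (set_coord x t) p = (fm_bound x p <= t).
Proof. by move=> Hp; rewrite /sat dotr_set_coord ler_ndivrMr // lerBrDl mulrC. Qed.

Lemma dotr_set_coord_indep x (v : 'rV[R]_n) t :
  v 0 k = 0 -> dotr v (set_coord x t) = dotr v x.
Proof.
move=> v0; rewrite -[in RHS](set_coord_id x).
by rewrite [LHS]dotr_set_coord [RHS]dotr_set_coord v0 !mul0r.
Qed.

Lemma fm_comb_bound x (p q : ineq) : 0 < p.1 0 k -> q.1 0 k < 0 ->
  sat x (fm_comb p q) -> fm_bound x q <= fm_bound x p.
Proof.
move=> Hp Hq; set t := fm_bound x p.
have comb_k : (fm_comb p q).1 0 k = 0 by rewrite !mxE /=; ring.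
have Hpt : dotr p.1 (set_coord x t) = p.2.
  by rewrite dotr_set_coord mulrC divfK ?gt_eqF // addrC subrK.
rewrite /sat -(dotr_set_coord_indep _ t comb_k) /= dotrDl !dotrZl Hpt lerD2l.
by rewrite (ler_pM2l Hp) -(sat_set_coord_neg _ t Hq).
Qed.

Lemma fm_elim_feasible S x : (forall p, p \in fm_elim S -> sat x p) ->
  exists x', forall p, p \in S -> sat x' p.
Proof.
move=> Hx; pose P := [seq p <- S | 0 < (p : ineq).1 0 k].
pose N := [seq q <- S | (q : ineq).1 0 k < 0].
have [t [HN HP]] : exists t, (forall l, l \in map (fm_bound x) N -> l <= t) /\
                             (forall u, u \in map (fm_bound x) P -> t <= u).
  apply: exists_between => _ _ /mapP[q Hq ->] /mapP[p Hp ->].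
  move: (Hp) (Hq); rewrite !mem_filter => /andP[Hp0 _] /andP[Hq0 _].
  apply: fm_comb_bound => //; apply: Hx.
  by rewrite mem_cat; apply/orP; right; apply/allpairsP; exists (p, q).
exists (set_coord x t) => p Hp; have [Hp0|Hp0|Hp0] := ltrgt0P (p.1 0 k).
- by rewrite sat_set_coord_pos // HP // map_f // mem_filter Hp0.
- by rewrite sat_set_coord_neg // HN // map_f // mem_filter Hp0.
- rewrite /sat dotr_set_coord_indep //; apply: Hx.
  by rewrite mem_cat mem_filter Hp0 eqxx Hp.
Qed.

End Elimination.

Lemma farkas_prefix (k : nat) (S : seq ineq) :
  (forall p, p \in S -> forall j : 'I_n, (k <= j)%N -> p.1 0 j = 0) ->
  ~ (exists x, forall p, p \in S -> sat x p) ->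
  exists2 b, b < 0 & conic_comb S 0 b.
Proof.
elim: k S => [|k IH] S HS Hinf.
  have [p Hp Hunsat] : exists2 p, p \in S & ~ sat 0 p.
    apply: NNPP => Hall; apply: Hinf; exists 0 => p Hp.
    by apply: NNPP => Hn; apply: Hall; exists p.
  have Hp0 : p.1 = 0 by apply/rowP => j; rewrite HS // mxE.
  exists p.2; last by rewrite -Hp0; exact: conic_comb_mem.
  by move: Hunsat; rewrite /sat Hp0 /dotr big1 => [/negP|j _]; rewrite ?ltNge ?mxE ?mul0r.
have [Hkn|Hnk] := ltnP k n; last first.
  by apply: IH => // p Hp j Hj; move: (ltn_ord j); rewrite ltnNge (leq_trans Hnk Hj).
pose kk := Ordinal Hkn.
have [b Hb Hd] : exists2 b, b < 0 & conic_comb (fm_elim kk S) 0 b.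
  apply: IH; last by move=> [x Hx]; apply: Hinf; exact: (fm_elim_feasible Hx).
  have Hj : forall j : 'I_n, (k <= j)%N -> j != kk -> (k.+1 <= j)%N.
    move=> j Hkj; apply: contraR; rewrite -leqNgt => Hjk.
    by apply/eqP/val_inj/eqP; rewrite /= eqn_leq Hjk.
  move=> p + j Hkj; rewrite mem_cat => /orP[|/allpairsP[[p1 q1] [/= Hp Hq ->]]].
    rewrite mem_filter => /andP[/eqP Hpk Hp].
    by have [->|/(Hj _ Hkj)/(HS _ Hp)] := eqVneq j kk.
  move: Hp Hq; rewrite !mem_filter => /andP[_ Hp] /andP[_ Hq]; rewrite !mxE /=.
  have [->|/(Hj _ Hkj) Hkj'] := eqVneq j kk; first ring.
  by rewrite (HS _ Hp j) // (HS _ Hq j) // !mulr0 addr0.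
by exists b => //; apply: conic_comb_trans Hd => p; exact: fm_elim_conic_comb.
Qed.

Lemma farkas (S : seq ineq) :
  ~ (exists x, forall p, p \in S -> sat x p) -> exists2 b, b < 0 & conic_comb S 0 b.
Proof.
by apply: (@farkas_prefix n) => p _ j; rewrite leqNgt ltn_ord.
Qed.

End FourierMotzkin.

Section DotProduct.
Variables (R : realType) (m : nat).
Implicit Types x y z : 'cV[R]_m.

Lemma dotvE x y : dotv x y = (x^T *m y) 0 0.
Proof. by rewrite mxE; apply: eq_bigr => i _; rewrite mxE. Qed.

Lemma dotvDl x y z : dotv (x + y) z = dotv x z + dotv y z.
Proof. by rewrite !dotvE linearD mulmxDl mxE. Qed.

Lemma dotvZl t x z : dotv (t *: x) z = t * dotv x z.
Proof. by rewrite !dotvE linearZ -scalemxAl mxE. Qed.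

Lemma dotvNl x z : dotv (- x) z = - dotv x z.
Proof. by rewrite -scaleN1r dotvZl mulN1r. Qed.

Lemma dotv0l z : dotv 0 z = 0.
Proof. by rewrite -(scale0r 0) dotvZl mul0r. Qed.

Lemma dotv_delta i z : dotv (delta_mx i 0) z = z i 0.
Proof. by rewrite dotvE trmx_delta -rowE mxE. Qed.

End DotProduct.

Definition sign_compatible (R : realType) (m : nat) (J K : {set 'I_m}) (y : 'cV[R]_m) :=
  forall i, (i \in J -> 0 <= y i 0) /\ (i \in K -> y i 0 <= 0).

Lemma partition_notin (m : nat) (I J K : {set 'I_m}) : is_partition I J K ->
  (forall i, i \in I :|: J -> i \notin K) /\ (forall i, i \in I :|: K -> i \notin J).
Proof.
case=> HIJ HIK HJK _; split=> i /setUP[] Hi; apply/negP => Hi'.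
- by move/setP/(_ i): HIK; rewrite !inE Hi Hi'.
- by move/setP/(_ i): HJK; rewrite !inE Hi Hi'.
- by move/setP/(_ i): HIJ; rewrite !inE Hi Hi'.
- by move/setP/(_ i): HJK; rewrite !inE Hi Hi'.
Qed.

Section Infeasibility.
Variables (R : realType) (m n : nat) (U : 'M[R]_(m, n)) (I J K : {set 'I_m}).
Hypothesis partIJK : is_partition I J K.

Definition polyhedron_system (b : 'cV[R]_m) : seq (ineq R n) :=
  [seq (row i U, b i 0) | i <- enum (I :|: J)] ++
  [seq (- row i U, - b i 0) | i <- enum (I :|: K)].

Lemma dotr_row i (x : 'rV[R]_n) : dotr (row i U) x = (U *m x^T) i 0.
Proof. by rewrite /dotr mxE; apply: eq_bigr => j _; rewrite !mxE. Qed.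

Lemma polyhedron_system_sat b x :
  (forall p, p \in polyhedron_system b -> sat x p) -> polyhedron U b I J K x^T.
Proof.
move=> Hx i.
have le_b : i \in I :|: J -> (U *m x^T) i 0 <= b i 0.
  move=> Hi; rewrite -dotr_row; apply: (Hx (row i U, b i 0)).
  by rewrite mem_cat map_f // mem_enum.
have ge_b : i \in I :|: K -> b i 0 <= (U *m x^T) i 0.
  move=> Hi; rewrite -lerN2 -dotr_row -dotrNl; apply: (Hx (- row i U, - b i 0)).
  by rewrite mem_cat map_f ?orbT // mem_enum.
split; first by move=> Hi; apply/eqP; rewrite eq_le le_b ?ge_b // inE Hi.
by split=> Hi; [apply: le_b | apply: ge_b]; rewrite inE Hi orbT.
Qed.

Lemma conic_comb_polyhedron_system b v beta : conic_comb (polyhedron_system b) v beta ->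
  exists y, [/\ sign_compatible J K y, y^T *m U = v & dotv y b = beta].
Proof.
have [notK notJ] := partition_notin partIJK.
elim=> {v beta} [p | v1 b1 v2 b2 _ [y1 [c1 <- <-]] _ [y2 [c2 <- <-]]
                 | t v beta t0 _ [y [c <- <-]]].
- rewrite mem_cat => /orP[]/mapP[i]; rewrite mem_enum => Hi -> /=.
    exists (delta_mx i 0); split; last by rewrite dotv_delta.
      move=> j; rewrite mxE; split=> Hj; first by case: (j == i).
      by case: eqP Hj => [-> Hi'|//]; move: (notK _ Hi); rewrite Hi'.
    by rewrite trmx_delta -rowE.
  exists (- delta_mx i 0); split; last by rewrite dotvNl dotv_delta.
    move=> j; rewrite !mxE; split=> Hj; last by case: (j == i); rewrite ?oppr_le0 ?oppr0.
    by case: eqP Hj => [-> Hi'|_ _]; [move: (notJ _ Hi); rewrite Hi' | rewrite oppr0].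
  by rewrite linearN /= mulNmx trmx_delta -rowE.
- exists (y1 + y2); split; last by rewrite dotvDl.
    move=> i; have [c1J c1K] := c1 i; have [c2J c2K] := c2 i.
    rewrite mxE; split=> Hi.
      by have := c1J Hi; have := c2J Hi; lra.
    by have := c1K Hi; have := c2K Hi; lra.
  by rewrite linearD /= mulmxDl.
- exists (t *: y); split; last by rewrite dotvZl.
    move=> i; have [cJ cK] := c i; rewrite mxE.
    by split=> Hi; [apply: mulr_ge0 | apply: mulr_ge0_le0]; auto.
  by rewrite linearZ /= -scalemxAl.
Qed.

Definition infeasibility_cert (b y : 'cV[R]_m) :=
  [/\ sign_compatible J K y, y^T *m U = 0 & dotv y b < 0].

Lemma infeasible_cert b : ~ (polyhedron U b I J K !=set0) -> exists y, infeasibility_cert b y.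
Proof.
move=> Hb; have [|beta Hbeta] := @farkas _ _ (polyhedron_system b).
  by move=> [x Hx]; apply: Hb; exists x^T; exact: polyhedron_system_sat.
by move=> /conic_comb_polyhedron_system[y [Hy Hy0 Hyb]]; exists y; split; rewrite ?Hyb.
Qed.

Lemma feasible_dotv_ge0 a x y : polyhedron U a I J K x ->
  sign_compatible J K y -> y^T *m U = 0 -> 0 <= dotv y a.
Proof.
move=> Hx Hy HyU; have HUx : dotv y (U *m x) = 0 by rewrite dotvE mulmxA HyU mul0mx mxE.
rewrite -[X in X <= _]HUx; apply: ler_sum => i _.
case: partIJK => _ _ _ /setP/(_ i); rewrite !inE /=.
have [HI [HJ HK]] := Hx i; have [yJ yK] := Hy i.
case/orP=> [/orP[]|] Hi; first by rewrite HI.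
- by apply: ler_wpM2l; auto.
- by apply: ler_wnM2l; auto.
Qed.

End Infeasibility.

Section CircuitCertificate.
Variables (R : realType) (m n : nat) (U : 'M[R]_(m, n)) (J K : {set 'I_m}) (b : 'cV[R]_m).

Definition supp (y : 'cV[R]_m) : {set 'I_m} := [set i | y i 0 != 0].

Lemma supp_subP (y z : 'cV[R]_m) :
  reflect (forall i, y i 0 = 0 -> z i 0 = 0) (supp z \subset supp y).
Proof.
apply: (iffP fintype.subsetP) => Hyz i; last by rewrite !inE; apply: contra => /eqP/Hyz->.
move=> y0; apply/eqP/negPn/negP => zi.
by move: (Hyz i); rewrite !inE y0 eqxx zi => /(_ isT).
Qed.

Lemma suppN (z : 'cV[R]_m) : supp (- z) = supp z.
Proof. by apply/setP => i; rewrite !inE mxE oppr_eq0. Qed.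

Lemma supp_eq0 (z : 'cV[R]_m) : (supp z == finset.set0) = (z == 0).
Proof.
apply/eqP/eqP => [Hz | ->]; last by apply/setP => i; rewrite !inE mxE eqxx.
apply/matrixP => i j; rewrite ord1 mxE; apply/eqP.
by move: (finset.in_set0 i); rewrite -Hz inE => /negbFE.
Qed.

Lemma sign_compatible_conformal (y w : 'cV[R]_m) : sign_compatible J K y ->
  (forall i, y i 0 = 0 -> w i 0 = 0) -> (forall i, 0 <= w i 0 * y i 0) ->
  sign_compatible J K w.
Proof.
move=> Hy Hwy Hconf i; have [yJ yK] := Hy i; have := Hconf i.
have [y0|yn0] := eqVneq (y i 0) 0; first by rewrite Hwy.
move=> Hwyi; split=> Hi.
  have y_gt0 : 0 < y i 0 by rewrite lt_neqAle eq_sym yn0 yJ.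
  by rewrite -(pmulr_lge0 _ y_gt0).
have y_lt0 : y i 0 < 0 by rewrite lt_neqAle yn0 yK.
by rewrite -(nmulr_lge0 _ y_lt0).
Qed.

Local Notation cert := (infeasibility_cert U J K b).

(* Move from y along -z until a coordinate of y in the support of z vanishes. *)
Lemma cert_shrink_step (y z : 'cV[R]_m) : cert y -> z^T *m U = 0 ->
  (forall i, y i 0 = 0 -> z i 0 = 0) -> 0 <= dotv z b -> (exists i, 0 < z i 0 * y i 0) ->
  exists w, cert w /\ supp w \proper supp y.
Proof.
move=> [Hy HyU Hyb] HzU Hzy Hzb [i1 Hi1].
pose P i := 0 < z i 0 * y i 0; pose F i := y i 0 / z i 0.
have FzE i : P i -> F i * z i 0 = y i 0.
  by move=> Pi; rewrite divfK //; apply: contraTneq Pi => z0; rewrite /P z0 mul0r ltxx.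
have [i0 Pi0 Hmin] := arg_minP F (Hi1 : P i1); set t := F i0 in Hmin *.
have t_gt0 : 0 < t by have := FzE i0 Pi0; move: Pi0; rewrite /P /t; nra.
pose w := y - t *: z.
have wE i : w i 0 = y i 0 - t * z i 0 by rewrite !mxE.
have Hwy i : y i 0 = 0 -> w i 0 = 0 by move=> y0; rewrite wE y0 Hzy // mulr0 subr0.
have Hconf i : 0 <= w i 0 * y i 0.
  rewrite wE; have [Pi|] := boolP (P i).
    rewrite -{1}(FzE i Pi) -mulrBl -mulrA mulr_ge0 ?subr_ge0 ?Hmin //.
    exact: ltW.
  by rewrite /P -leNgt => zy_le0; nra.
exists w; split.
  split; first exact: sign_compatible_conformal Hy Hwy Hconf.
    by rewrite linearB linearZ /= mulmxBl -scalemxAl HyU HzU scaler0 subr0.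
  rewrite dotvDl dotvNl dotvZl; have := mulr_ge0 (ltW t_gt0) Hzb; lra.
rewrite properE (introT (supp_subP _ _) Hwy) /=; apply/fintype.subsetPn; exists i0.
  by rewrite inE; apply: contraTneq Pi0 => y0; rewrite /P y0 mulr0 ltxx.
by rewrite inE negbK wE -(FzE i0 Pi0) subrr.
Qed.

Lemma cert_neq0 y : cert y -> y != 0.
Proof. by case=> _ _; apply: contraTneq => ->; rewrite dotv0l ltxx. Qed.

Lemma cert_shrink y : cert y -> ~ circuit U (supp y) ->
  exists w, cert w /\ supp w \proper supp y.
Proof.
move=> Hy Hnc; have [HyJK HyU Hyb] := Hy.
have [D HD [z [z0 [zD zU]]]] : exists2 D : {set 'I_m}, D \proper supp y & lin_dep U D.
  apply: NNPP => Hmin; apply: Hnc; split=> [|D HD HdepD]; last by apply: Hmin; exists D.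
  exists y; split; first exact: cert_neq0.
  by split=> // i; rewrite inE negbK => /eqP.
have {D HD zD} : supp z \proper supp y.
  apply: sub_proper_trans HD; apply/fintype.subsetP => i; rewrite inE.
  by apply: contraR => /zD ->; rewrite eqxx.
wlog zb : z z0 zU / 0 <= dotv z b => [Hwlog Hzy|].
  have [zb|zb_lt0] := leP 0 (dotv z b); first exact: (Hwlog z).
  apply: (Hwlog (- z)); rewrite ?oppr_eq0 ?suppN //.
    by rewrite linearN /= mulNmx zU oppr0.
  by rewrite dotvNl oppr_ge0 ltW.
move=> Hzy; have Hzy0 := supp_subP _ _ (proper_sub Hzy).
have [[i Hi]|Hnpos] := classic (exists i, 0 < z i 0 * y i 0).
  by apply: cert_shrink_step Hy zU Hzy0 zb _; exists i.
have Hconf i : 0 <= (- z) i 0 * y i 0.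
  by rewrite mxE mulNr oppr_ge0 leNgt; apply/negP => Hi; apply: Hnpos; exists i.
have Hzy0N i : y i 0 = 0 -> (- z) i 0 = 0 by move/Hzy0; rewrite mxE => ->; rewrite oppr0.
have zUN : (- z)^T *m U = 0 by rewrite linearN /= mulNmx zU oppr0.
have [zb0|zb_gt0] := eqVneq (dotv z b) 0.
  apply: cert_shrink_step Hy zUN Hzy0N _ _; first by rewrite dotvNl zb0 oppr0.
  have [i] : exists i, i \in supp z by apply/set0Pn; rewrite supp_eq0.
  rewrite inE => zi; exists i; rewrite lt_def Hconf andbT mxE mulNr oppr_eq0.
  by rewrite mulf_eq0 negb_or zi /=; apply: contra zi => /eqP/Hzy0->.
exists (- z); split; last by rewrite suppN.
split=> //; first exact: sign_compatible_conformal HyJK Hzy0N Hconf.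
by rewrite dotvNl oppr_lt0 lt_def zb_gt0.
Qed.

Lemma exists_circuit_cert y : cert y -> exists w, cert w /\ circuit U (supp w).
Proof.
move Hs: #|supp y| => s; elim/ltn_ind: s y Hs => s IH y Hs Hy.
have [|Hnc] := classic (circuit U (supp y)); first by exists y.
have [w [Hw Hwy]] := cert_shrink Hy Hnc.
by apply: (IH #|supp w|) => //; rewrite -Hs proper_card.
Qed.

End CircuitCertificate.

Lemma circuit_vector_unique (R : realType) (m n : nat) (U : 'M[R]_(m, n))
    (C : {set 'I_m}) (c y : 'cV[R]_m) (i0 : 'I_m) :
  circuit U C -> circuit_vector U C c -> y^T *m U = 0 -> supp y = C -> i0 \in C ->
  y = (y i0 0 / c i0 0) *: c.
Proof.
move=> [_ Hmin] [cU Hc] yU Hy Hi0; have ci0 : c i0 0 != 0 by rewrite Hc.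
pose d := y - (y i0 0 / c i0 0) *: c; apply/eqP; rewrite -subr_eq0 -/d.
apply: contraT => d0; case: (Hmin _ (properD1 Hi0)); exists d; split=> //; split.
  2: by rewrite linearB linearZ /= mulmxBl -scalemxAl yU cU scaler0 subr0.
move=> i; rewrite !inE negb_and negbK !mxE => /orP[/eqP-> | iC]; first by rewrite divfK ?subrr.
have yi0 : y i 0 = 0 by apply/eqP; move: iC; rewrite -Hy inE => /negPn.
have ci0' : c i 0 = 0 by apply/eqP; move: iC; rewrite -Hc => /negPn.
by rewrite yi0 ci0' mulr0 subr0.
Qed.

Lemma closure_dotv_lt0 (R : realType) (m : nat) (S : set 'cV[R]_m) (w b : 'cV[R]_m) :
  closure S b -> dotv w b < 0 -> exists2 y, S y & dotv w y < 0.
Proof.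
move=> Hb wb; pose sw := \sum_i `|w i 0|.
have sw_ge0 : 0 <= sw by apply: sumr_ge0 => i _.
pose e := - dotv w b / (sw + 1).
have e_gt0 : 0 < e by rewrite divr_gt0 ?oppr_gt0 // ltr_wpDl.
have [y [Sy [_ Hby]]] := Hb _ (nbhsx_ballx b e e_gt0).
exists y => //; have : dotv w y - dotv w b <= sw * e.
  rewrite /dotv -sumrB /sw mulr_suml; apply: ler_sum => i _.
  rewrite -mulrBr (le_trans (ler_norm _)) // normrM distrC ler_wpM2l //.
  exact/ltW/(Hby i 0).
have : (sw + 1) * e = - dotv w b by rewrite mulrC divfK // gt_eqF // ltr_wpDl.
nra.
Qed.

Theorem mainTheorem5 (R : realType) (m n : nat) (U : 'M[R]_(m, n))
  (c : {set 'I_m} -> 'cV[R]_m) (I J K : {set 'I_m}) (a : 'cV[R]_m) :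
  (forall i : 'I_m, row i U != 0) ->
  (forall C : {set 'I_m}, circuit U C -> circuit_vector U C (c C)) ->
  is_partition I J K ->
  polyhedron U a I J K !=set0 ->
  forall b : 'cV[R]_m, face_of U c a b -> polyhedron U b I J K !=set0.
Proof.
(* The rows of U need not be nonzero. *)
move=> _ Hc partIJK [x Hx] b Hb; apply: NNPP => /(infeasible_cert partIJK)[y Hy].
have [w [Hw Hcirc]] := exists_circuit_cert Hy; have [wJK wU wb] := Hw.
have [i0 Hi0] : exists i0, i0 \in supp w by apply/set0Pn; rewrite supp_eq0 (cert_neq0 Hw).
have w_mu := circuit_vector_unique Hcirc (Hc _ Hcirc) wU erefl Hi0.
have wa := feasible_dotv_ge0 partIJK Hx wJK wU.
have [y' /(_ _ Hcirc) Hsg wy'] := closure_dotv_lt0 Hb wb.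
move: wa wy'; rewrite w_mu !dotvZl; set mu := _ / _ => wa.
by rewrite -sgr_lt0 sgrM Hsg -sgrM sgr_lt0 ltNge wa.
Qed.
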